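(* Fix $\mathbf a=(a_\alpha)_{\alpha\in R^+}\in\mathbb Z_{\ge0}^{n(n-1)/2}$. Then the set $\{\overline{\mathbf f^{\mathbf s}}:\mathbf s\in S(\mathbf a)\}$ of images of the monomials $\mathbf f^{\mathbf s}$ spans $S(\mathfrak n^-)/\mathcal I(\mathbf a)$.
   Context: Let $\mathfrak{sl}_n=\mathfrak n^+\oplus\mathfrak h\oplus\mathfrak n^-$ with simple roots $\alpha_1,\dots,\alpha_{n-1}$ and positive roots $R^+=\{\alpha_{k,\ell}=\alpha_k+\dots+\alpha_\ell:1\le k\le\ell\le n-1\}$; $f_\alpha\in\mathfrak g_{-\alpha}$, $e_\alpha\in\mathfrak g_\alpha$ are root vectors. $S(\mathfrak n^-)$ is the symmetric algebra (polynomial ring) of $\mathfrak n^-$, identified with the associated graded algebra of $U(\mathfrak n^-)$ for the PBW filtration. $\mathfrak n^+$ acts on $\mathfrak n^-\cong\mathfrak{sl}_n/(\mathfrak n^+\oplus\mathfrak h)$ via the adjoint action (so $e_\alpha\circ f_\beta$ is a multiple of $f_{\beta-\alpha}$ if $\beta-\alpha\in R^+$ and $0$ otherwise), and this action is extended to $S(\mathfrak n^-)$ by derivations; denote it by $\circ$. For $\mathbf a=(a_\alpha)$, $\mathcal I(\mathbf a)\subset S(\mathfrak n^-)$ is the ideal generated by $\sum_{\alpha\in R^+}U(\mathfrak n^+)\circ f_\alpha^{a_\alpha+1}$. A Dyck path is a sequence $\mathbf p=(\beta_1,\dots,\beta_s)$, $s\ge1$, of positive roots such that if $\beta_i=\alpha_{k,\ell}$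 then $\beta_{i+1}\in\{\alpha_{k+1,\ell},\alpha_{k,\ell+1}\}$; if $\beta_1=\alpha_{k_1,\ell_1}$ and $\beta_s=\alpha_{k_s,\ell_s}$, its base root is $\beta(\mathbf p)=\alpha_{k_1,\ell_s}$. Let $\mathcal P(\mathbf a)=\{(x_\alpha)\in\mathbb R^{n(n-1)/2}:\sum_{\alpha\in\mathbf p}x_\alpha\le a_{\beta(\mathbf p)}\text{ for all Dyck paths }\mathbf p\}$ and $S(\mathbf a)=\mathcal P(\mathbf a)\cap\mathbb Z_{\ge0}^{n(n-1)/2}$. For $\mathbf t=(t_\alpha)\in\mathbb Z_{\ge0}^{n(n-1)/2}$, $\mathbf f^{\mathbf t}=\prod_{\alpha\in R^+}f_\alpha^{t_\alpha}\in S(\mathfrak n^-)$. *)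

From HB Require Import structures.
From mathcomp Require Import all_boot all_order all_algebra.
From mathcomp Require Import mpoly.
Set Implicit Arguments. Unset Strict Implicit. Unset Printing Implicit Defensive.
Import GRing.Theory.
Local Open Scope ring_scope.

(* The pair (i,j) of 0-based indices i < j < n
   stands for eps_i - eps_j, i.e. alpha_{k,l} with k = i+1, l = j
   (1-based, 1 <= k <= l <= n-1).  f_(i,j) = E_{j,i}, e_(i,j) = E_{i,j}. *)
Definition posroot (n : nat) := {p : 'I_n * 'I_n | (p.1 < p.2)%N}.

Definition nroots (n : nat) := #|{: posroot n}|.

(* index of the variable f_alpha in S(n^-) = F[f_alpha : alpha in R^+] *)
Definition ridx (n : nat) (a : posroot n) : 'I_(nroots n) := enum_rank a.

Definition rlo n (a : posroot n) : nat := (val a).1.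
Definition rhi n (a : posroot n) : nat := (val a).2.

Notation Sn F n := {mpoly F[nroots n]}.

Definition fvar (F : fieldType) n (a : posroot n) : Sn F n := 'X_(ridx a).

(* e_alpha o f_beta : adjoint action on n^- = sl_n / (n^+ + h).
   With e = E_{i,j}, f = E_{q,p} (alpha=(i,j), beta=(p,q)):
   [E_{ij}, E_{qp}] = delta_{jq} E_{ip} - delta_{pi} E_{qj};
   projecting onto n^- keeps the strictly lower-triangular entries. *)
Definition ef_act (F : fieldType) n (a b : posroot n) : Sn F n :=
  \sum_(c : posroot n)
     ((if (rhi a == rhi b) && (rlo c == rlo b) && (rhi c == rlo a)
       then fvar F c else 0)
    - (if (rlo b == rlo a) && (rlo c == rhi a) && (rhi c == rhi b)
       then fvar F c else 0)).

(* e_alpha acting on S(n^-) by derivations *)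
Definition eact (F : fieldType) n (a : posroot n) (P : Sn F n) : Sn F n :=
  \sum_(b : posroot n) mderiv (ridx b) P * ef_act F a b.

(* action of the PBW-type word e_{a_1} ... e_{a_r} in U(n^+) *)
Definition wact (F : fieldType) n (w : seq (posroot n)) (P : Sn F n) : Sn F n :=
  foldr (@eact F n) P w.

(* I(a): the ideal generated by sum_alpha U(n^+) o f_alpha^(a_alpha + 1).
   Since the e_alpha generate U(n^+) as an algebra, U(n^+) o g is spanned by
   the w o g for words w; the ideal generated is the set of finite sums
   sum_k c_k * (w_k o f_{alpha_k}^(a_{alpha_k}+1)) with c_k in S(n^-). *)
Definition in_Ia (F : fieldType) n (a : posroot n -> nat) (P : Sn F n) : Prop :=
  exists l : seq (Sn F n * seq (posroot n) * posroot n),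
    P = \sum_(x <- l) x.1.1 * wact x.1.2 (fvar F x.2 ^+ (a x.2).+1).

Definition dyck_step n (b c : posroot n) : bool :=
  ((rlo c == (rlo b).+1) && (rhi c == rhi b)) ||
  ((rlo c == rlo b) && (rhi c == (rhi b).+1)).

Definition dyck_path n (p : seq (posroot n)) : bool :=
  if p is b :: p' then path (@dyck_step n) b p' else false.

(* base root of a Dyck path: alpha_{k_1, l_s}; returns None only if the
   pair is not a positive root (impossible for Dyck paths). *)
Definition base_root n (b : posroot n) (p : seq (posroot n)) : option (posroot n) :=
  [pick c : posroot n | (rlo c == rlo b) && (rhi c == rhi (last b p))].

(* S(a) = P(a) ∩ Z_{>=0}^{R^+}: integer points satisfying all Dyck path
   inequalities *)
Definition in_Sa n (a : posroot n -> nat) (t : posroot n -> nat) : Prop :=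
  forall (b : posroot n) (p : seq (posroot n)) (c : posroot n),
    dyck_path (b :: p) -> base_root b p = Some c ->
    (\sum_(x <- b :: p) t x <= a c)%N.

Definition fmon (F : fieldType) n (t : posroot n -> nat) : Sn F n :=
  \prod_(c : posroot n) fvar F c ^+ t c.

(* Weigh a monomial by the sum of [rlo v * rhi v]
   over its factors [f_v].  If the exponent of [f^m] is not in S(a), some Dyck path with base
   root c carries more than a_c factors of [f^m]; pick a_c + 1 of them, a list S which is a
   chain for the componentwise order on endpoints and lies in the box of roots inside c.
   The root vectors [e_a] whose root shares an endpoint with c act on monomials in box roots
   by replacing one factor at a time, preserving the multisets of left and right endpoints;
   a suitable word in them sends [f_c^(a_c + 1)] to a nonzero multiple of [f^S] (this uses
   characteristic 0) plus monomials with the same endpoint multisets as S but different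
   from it, which by the rearrangement inequality have smaller weight.  Since that image
   lies in I(a), [f^m] is congruent to a combination of lighter monomials, and induction on
   the weight concludes. *)

From HB Require Import structures.
From mathcomp Require Import all_boot all_order all_algebra.
From mathcomp Require Import mpoly.
From mathcomp Require Import zify.
From Stdlib Require Import Classical.
Set Implicit Arguments. Unset Strict Implicit. Unset Printing Implicit Defensive.
Import GRing.Theory.
Local Open Scope ring_scope.

Lemma posroot_eq n (x y : posroot n) : rlo x = rlo y -> rhi x = rhi y -> x = y.
Proof.
case: x y => [[x1 x2] hx] [[y1 y2] hy]; rewrite /rlo /rhi /= => e1 e2.
by apply/val_inj; congr pair; apply/val_inj.
Qed.

Lemma rlo_lt_rhi n (x : posroot n) : (rlo x < rhi x)%N.
Proof. by case: x => [[x1 x2] hx]. Qed.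

Lemma rhi_lt n (x : posroot n) : (rhi x < n)%N.
Proof. by case: x => [[x1 x2] hx]; rewrite /rhi /=. Qed.

Definition mkroot n (i j : nat) : option (posroot n) :=
  [pick c : posroot n | (rlo c == i) && (rhi c == j)].

Variant mkroot_spec n i j : option (posroot n) -> Type :=
  | MkrootSome u of rlo u = i & rhi u = j : @mkroot_spec n i j (Some u)
  | MkrootNone of ~~ (i < j < n)%N : @mkroot_spec n i j None.

Lemma mkrootP n i j : @mkroot_spec n i j (mkroot n i j).
Proof.
rewrite /mkroot; case: pickP => [u /andP[/eqP <- /eqP <-]|none]; first by constructor.
constructor; apply/negP => /andP[hij hjn].
have hin : (i < n)%N by apply: ltn_trans hjn.
by have := none (exist _ (Ordinal hin, Ordinal hjn) hij); rewrite /rlo /rhi /= !eqxx.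
Qed.

Lemma mkrootK n (q : posroot n) : mkroot n (rlo q) (rhi q) = Some q.
Proof.
case: mkrootP => [u /posroot_eq e1 /e1 -> //|].
by rewrite rlo_lt_rhi rhi_lt.
Qed.

Definition ofvar (F : fieldType) n (o : option (posroot n)) : Sn F n :=
  if o is Some u then fvar F u else 0.

Lemma sum_fvar_pick (F : fieldType) n (b : bool) i j :
  \sum_(c : posroot n) (if (b && (rlo c == i)) && (rhi c == j) then fvar F c else 0)
  = if b then ofvar F (mkroot n i j) else 0.
Proof.
case: b => /=; last by rewrite big1.
case: mkrootP => [u <- <-|nij] /=.
  rewrite (bigD1 u) //= !eqxx big1 ?addr0 // => c /negbTE hc.
  case: ifP => // /andP[/eqP e1 /eqP e2].
  by move: hc; rewrite (posroot_eq e1 e2) eqxx.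
rewrite big1 // => c _; case: ifP => // /andP[/eqP ei /eqP ej].
by move: nij; rewrite -ei -ej rlo_lt_rhi rhi_lt.
Qed.

Lemma ef_actE (F : fieldType) n (a v : posroot n) :
  ef_act F a v = (if rhi a == rhi v then ofvar F (mkroot n (rlo v) (rlo a)) else 0)
               - (if rlo v == rlo a then ofvar F (mkroot n (rhi a) (rhi v)) else 0).
Proof. by rewrite /ef_act sumrB !sum_fvar_pick. Qed.

Section Derivation.

Variables (F : fieldType) (n : nat) (a : posroot n).

Lemma eactD (P Q : Sn F n) : eact a (P + Q) = eact a P + eact a Q.
Proof. by rewrite /eact -big_split; apply: eq_bigr => b _; rewrite mderivD mulrDl. Qed.

Lemma eact0 : eact a (0 : Sn F n) = 0.
Proof. by rewrite /eact big1 // => b _; rewrite mderiv0 mul0r. Qed.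

Lemma eactZ k (P : Sn F n) : eact a (k *: P) = k *: eact a P.
Proof. by rewrite /eact scaler_sumr; apply: eq_bigr => b _; rewrite mderivZ scalerAl. Qed.

Lemma eact_sum I (r : seq I) (G : I -> Sn F n) :
  eact a (\sum_(i <- r) G i) = \sum_(i <- r) eact a (G i).
Proof. exact: (big_morph _ eactD eact0). Qed.

Lemma eactM (P Q : Sn F n) : eact a (P * Q) = eact a P * Q + P * eact a Q.
Proof.
rewrite /eact mulr_suml mulr_sumr -big_split; apply: eq_bigr => b _.
by rewrite mderivM mulrDl mulrAC mulrA.
Qed.

Lemma eact1 : eact a (1 : Sn F n) = 0.
Proof. by rewrite /eact big1 // => b _; rewrite -mpolyX0 mderivX mnm0E scale0r mul0r. Qed.

Lemma eact_fvar (v : posroot n) : eact a (fvar F v) = ef_act F a v.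
Proof.
rewrite /eact (bigD1 v) //= big1 ?addr0 => [|b hb].
  rewrite /fvar mderivX mnm1E eqxx -[X in (X - _)%MM]add0m addmK.
  by rewrite mpolyX0 scale1r mul1r.
rewrite /fvar mderivX mnm1E (inj_eq enum_rank_inj) eq_sym (negbTE hb).
by rewrite scale0r mul0r.
Qed.

End Derivation.

Section RimAction.

Variables (F : fieldType) (n l0 h1 : nat).

Definition in_box (v : posroot n) := (l0 <= rlo v)%N && (rhi v <= h1)%N.

Definition on_rim (a : posroot n) := (rlo a == l0) || (rhi a == h1).

(* For [a] on the rim and [v] in the box, at most one of the two terms of [ef_act a v]
   is nonzero. *)
Definition eshift (a v : posroot n) : option (posroot n) :=
  if rlo a == l0 then (if rlo v == l0 then mkroot n (rhi a) (rhi v) else None)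
  else (if rhi v == h1 then mkroot n (rlo v) (rlo a) else None).

Definition esign (a : posroot n) : F := if rlo a == l0 then -1 else 1.

Lemma eact_fvar_box a v : on_rim a -> in_box v ->
  eact a (fvar F v) = esign a *: ofvar F (eshift a v).
Proof.
move=> ra /andP[hl hh]; rewrite eact_fvar ef_actE /esign /eshift.
case: (boolP (rlo a == l0)) => [/eqP ea|na].
  case: mkrootP => [u hu1 hu2|_].
    by have := rlo_lt_rhi u; rewrite hu1 hu2 ea ltnNge hl.
  by rewrite /= if_same sub0r scaleN1r ea; case: (rlo v == l0).
move: ra; rewrite /on_rim (negbTE na) /= => /eqP ha.
case: (mkrootP n (rhi a)) => [u hu1 hu2|_].
  by have := rlo_lt_rhi u; rewrite hu1 hu2 ha ltnNge hh.
by rewrite /= if_same subr0 scale1r ha eq_sym; case: (rhi v == h1).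
Qed.

Lemma eshift_box a v u : on_rim a -> in_box v -> eshift a v = Some u -> in_box u.
Proof.
move=> ra /andP[hl hh]; rewrite /eshift /in_box; case: ifP => [/eqP ea|na].
  case: ifP => // _; case: mkrootP => // u' e1 e2 [<-].
  by rewrite e1 e2 hh andbT -ea ltnW ?rlo_lt_rhi.
move: ra; rewrite /on_rim na /= => /eqP ha.
by case: ifP => // _; case: mkrootP => // u' e1 e2 [<-]; rewrite e1 e2 hl -ha ltnW ?rlo_lt_rhi.
Qed.

Definition fmono (T : seq (posroot n)) : Sn F n := \prod_(v <- T) fvar F v.

Fixpoint leibniz (d : posroot n -> option (posroot n)) (T : seq (posroot n)) :=
  if T is v :: T' then
    (if d v is Some u then [:: u :: T'] else [::]) ++ map (cons v) (leibniz d T')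
  else [::].

Lemma leibnizP d T T' : T' \in leibniz d T ->
  exists P v Q u, [/\ T = P ++ v :: Q, T' = P ++ u :: Q & d v = Some u].
Proof.
elim: T T' => [|v T IH] T' //=; rewrite mem_cat => /orP[|].
  by case E: (d v) => [u|] //; rewrite inE => /eqP ->; exists [::], v, T, u.
case/mapP => T'' /IH [P [w [Q [u [-> -> e]]]]] ->.
by exists (v :: P), w, Q, u.
Qed.

Lemma mem_leibniz d P Q v u : d v = Some u -> P ++ u :: Q \in leibniz d (P ++ v :: Q).
Proof.
move=> e; elim: P => [|x P IH] /=; first by rewrite e mem_cat inE eqxx.
by rewrite mem_cat map_f ?orbT.
Qed.

Lemma eact_fmono a T : on_rim a -> all in_box T ->
  eact a (fmono T) = esign a *: \sum_(T' <- leibniz (eshift a) T) fmono T'.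
Proof.
move=> ra; elim: T => [|v T IH] /=; first by rewrite /fmono big_nil eact1 big_nil scaler0.
case/andP=> hv hT; rewrite /fmono big_cons eactM -/(fmono T) IH // eact_fvar_box //.
rewrite big_cat /= big_map.
under [X in _ = _ *: (_ + X)]eq_bigr do rewrite /fmono big_cons -/(fmono _).
rewrite -mulr_sumr scalerDr scalerAr; congr (_ + _).
case: (eshift a v) => [u|] /=; first by rewrite big_seq1 /fmono big_cons scalerAl.
by rewrite big_nil scaler0 mul0r.
Qed.

(* The monomials, as lists of roots, of [wact w (\sum_(T <- Ts) fmono T)], up to a
   global sign: each letter of [w] is applied to one factor at a time. *)
Definition wterms (w : seq (posroot n)) (Ts : seq (seq (posroot n))) :=
  foldr (fun a Ts => flatten (map (leibniz (eshift a)) Ts)) Ts w.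

Lemma wterms_cat w1 w2 Ts : wterms (w1 ++ w2) Ts = wterms w1 (wterms w2 Ts).
Proof. exact: foldr_cat. Qed.

Lemma wterms_consP a w Ts T' : T' \in wterms (a :: w) Ts ->
  exists2 T, T \in wterms w Ts & T' \in leibniz (eshift a) T.
Proof. by case/flattenP => s /mapP[T hT ->] hs; exists T. Qed.

Lemma mem_wterms_cons a w Ts T T' : T \in wterms w Ts ->
  T' \in leibniz (eshift a) T -> T' \in wterms (a :: w) Ts.
Proof. by move=> hT hT'; apply/flattenP; exists (leibniz (eshift a) T); rewrite ?map_f. Qed.

Lemma wterms_box w Ts : all on_rim w -> (forall T, T \in Ts -> all in_box T) ->
  forall T, T \in wterms w Ts -> all in_box T.
Proof.
move=> rw hTs; elim: w rw => [|a w IH] /=; first by move=> _; exact: hTs.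
case/andP=> ra rw T /wterms_consP[T1 /(IH rw) bT1 /leibnizP[P [v [Q [u [e1 -> e3]]]]]].
move: bT1; rewrite e1 !all_cat /= => /and3P[-> bv ->].
by rewrite (eshift_box ra bv e3).
Qed.

Lemma wact_wterms w Ts : all on_rim w -> (forall T, T \in Ts -> all in_box T) ->
  wact w (\sum_(T <- Ts) fmono T)
  = (\prod_(a <- w) esign a) *: \sum_(T <- wterms w Ts) fmono T.
Proof.
move=> rw bTs; elim: w rw => [|a w IH] /=; first by rewrite big_nil scale1r.
case/andP=> ra rw; rewrite IH // eactZ eact_sum big_cons mulrC -scalerA.
congr (_ *: _); rewrite big_flatten big_map /= scaler_sumr.
rewrite big_seq [RHS]big_seq; apply: eq_bigr => T hT.
by rewrite eact_fmono // (wterms_box rw bTs hT).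
Qed.

(* A rim operator [e_a] with [rlo a = l0] trades a left endpoint [l0] for [rhi a];
   any other rim operator trades a right endpoint [h1] for [rlo a]. *)
Definition lo_added (w : seq (posroot n)) := [seq rhi a | a <- w & rlo a == l0].
Definition hi_added (w : seq (posroot n)) := [seq rlo a | a <- w & rlo a != l0].

Lemma lo_added_cat w1 w2 : lo_added (w1 ++ w2) = lo_added w1 ++ lo_added w2.
Proof. by rewrite /lo_added filter_cat map_cat. Qed.

Lemma hi_added_cat w1 w2 : hi_added (w1 ++ w2) = hi_added w1 ++ hi_added w2.
Proof. by rewrite /hi_added filter_cat map_cat. Qed.

Lemma wterms_perm w T0 T : T \in wterms w [:: T0] ->
  perm_eq (map (@rlo n) T ++ nseq (size (lo_added w)) l0) (lo_added w ++ map (@rlo n) T0)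
  /\ perm_eq (map (@rhi n) T ++ nseq (size (hi_added w)) h1) (hi_added w ++ map (@rhi n) T0).
Proof.
elim: w T => [|a w IH] T /=; first by rewrite inE => /eqP ->; rewrite !cats0.
case/wterms_consP => T1 /IH[IHl IHh] /leibnizP[P [v [Q [u [eT1 ->]]]]].
move: IHl IHh; rewrite eT1 /eshift /lo_added /hi_added /= !map_cat /=.
case: (rlo a == l0) => /=; case: ifP => [/eqP ev hl hh|_ _ _ //];
  case: mkrootP => // u' e1 e2 [<-]; rewrite e1 e2;
  (split; [move: hl | move: hh]) => /permP hc; apply/permP => p; move: (hc p);
  rewrite ?ev !count_cat /= ?count_cat !count_nseq; lia.
Qed.

End RimAction.

Definition le_pair (x y : nat * nat) := (x.1 <= y.1)%N && (x.2 <= y.2)%N.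

Definition pair_weight (X : seq (nat * nat)) := (\sum_(x <- X) x.1 * x.2)%N.

Lemma pair_weight_cons x X : pair_weight (x :: X) = (x.1 * x.2 + pair_weight X)%N.
Proof. by rewrite /pair_weight big_cons. Qed.

Lemma perm_to_rem2 (T : eqType) (x y : T) s : x \in s -> y \in s -> x != y ->
  perm_eq s (x :: y :: rem y (rem x s)).
Proof.
move=> hx hy nxy; apply: perm_trans (perm_to_rem hx) _; rewrite perm_cons.
by apply/perm_to_rem/rem_mem; rewrite 1?eq_sym.
Qed.

Lemma exchange_pairs X Y (S T : seq (nat * nat)) :
  all (le_pair (X, Y)) S -> (X, Y) \notin T ->
  perm_eq (unzip1 T) (X :: unzip1 S) -> perm_eq (unzip2 T) (Y :: unzip2 S) ->
  exists2 T1, perm_eq (unzip1 T1) (unzip1 S) /\ perm_eq (unzip2 T1) (unzip2 S)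
            & (pair_weight T < X * Y + pair_weight T1)%N.
Proof.
move=> hXY nXY h1 h2.
have lo1 z : z \in unzip1 T -> (X <= z)%N.
  rewrite (perm_mem h1) inE => /orP[/eqP -> // | /mapP[[z1 z2] hz ->]].
  by case/andP: (allP hXY _ hz) => /= ? ?.
have lo2 z : z \in unzip2 T -> (Y <= z)%N.
  rewrite (perm_mem h2) inE => /orP[/eqP -> // | /mapP[[z1 z2] hz ->]].
  by case/andP: (allP hXY _ hz) => /= ? ?.
have : X \in unzip1 T by rewrite (perm_mem h1) mem_head.
case/mapP => -[x h] hXh /= eX.
have : Y \in unzip2 T by rewrite (perm_mem h2) mem_head.
case/mapP => -[l y] hlY /= eY.
subst x y.
have nXl : X != l by apply: contraNneq nXY => ->.
have nYh : Y != h by apply: contraNneq nXY => ->.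
have pT : perm_eq T ((X, h) :: (l, Y) :: rem (l, Y) (rem (X, h) T)).
  by apply: perm_to_rem2 => //; apply: contraNneq nXl => -[-> _].
set T0 := rem _ _ in pT.
have ltXl : (X < l)%N by rewrite ltn_neqAle nXl lo1 // (map_f _ hlY).
have ltYh : (Y < h)%N by rewrite ltn_neqAle nYh lo2 // (map_f _ hXh).
exists ((l, h) :: T0); first split.
- rewrite -(perm_cons X); apply: perm_trans h1; rewrite perm_sym.
  exact: perm_trans (perm_map _ pT) _.
- rewrite -(perm_cons Y); apply: perm_trans h2; rewrite perm_sym.
  by apply: perm_trans (perm_map _ pT) _; apply/permP => p /=; rewrite addnCA.
by rewrite /pair_weight (perm_big _ pT) !big_cons /=; nia.
Qed.

Lemma rearrangement (S : seq (nat * nat)) : pairwise le_pair S -> forall T,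
  perm_eq (unzip1 T) (unzip1 S) -> perm_eq (unzip2 T) (unzip2 S) ->
  (pair_weight T < pair_weight S)%N || perm_eq T S.
Proof.
elim: S => [|[X Y] S IH] /=.
  by move=> _ [|t T] /perm_size // _ _; rewrite perm_refl orbT.
case/andP => hXY /IH {}IH T h1 h2; rewrite pair_weight_cons.
case: (boolP ((X, Y) \in T)) => [hin|nin].
  have pT := perm_to_rem hin; set R := rem _ _ in pT.
  have pR1 : perm_eq (unzip1 R) (unzip1 S).
    rewrite -(perm_cons X); apply: perm_trans h1.
    by rewrite perm_sym (perm_map _ pT).
  have pR2 : perm_eq (unzip2 R) (unzip2 S).
    rewrite -(perm_cons Y); apply: perm_trans h2.
    by rewrite perm_sym (perm_map _ pT).
  rewrite /pair_weight (perm_big _ pT) big_cons -!/(pair_weight _) ltn_add2l.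
  by case/orP: (IH R pR1 pR2) => [->|pRS] //; rewrite (perm_trans pT) ?perm_cons ?orbT.
have [T1 [pT1 pT2] ltT] := exchange_pairs hXY nin h1 h2.
apply/orP; left; apply: (leq_trans ltT); rewrite leq_add2l.
by case/orP: (IH T1 pT1 pT2) => [/ltnW //|pTS]; rewrite /pair_weight (perm_big _ pTS).
Qed.

Lemma count_split_mem (T : eqType) (z : T) (p : pred T) s :
  count p s = (count p [seq x <- s | x != z] + p z * count_mem z s)%N.
Proof.
elim: s => [|x s IH] /=; first by rewrite muln0.
by rewrite IH; case: eqVneq => [->|] /=; lia.
Qed.

Lemma perm_cancel_padding (T : eqType) (z : T) (s t : seq T) :
  perm_eq (t ++ nseq (size [seq x <- s | x != z]) z) ([seq x <- s | x != z] ++ nseq (size s) z) ->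
  perm_eq t s.
Proof.
have sizeE : size s = (size [seq x <- s | x != z] + count_mem z s)%N.
  by rewrite -count_predT (count_split_mem z predT) count_predT mul1n.
move=> /permP h; apply/permP => p; move: (h p).
by rewrite !count_cat !count_nseq sizeE (count_split_mem z p s); lia.
Qed.

Definition le_root n (x y : posroot n) := (rlo x <= rlo y)%N && (rhi x <= rhi y)%N.

Lemma le_root_refl n : reflexive (@le_root n).
Proof. by move=> x; rewrite /le_root !leqnn. Qed.

Lemma le_root_trans n : transitive (@le_root n).
Proof.
move=> y x z /andP[h1 h2] /andP[h3 h4].
by rewrite /le_root (leq_trans h1 h3) (leq_trans h2 h4).
Qed.

Definition root_weight n (T : seq (posroot n)) := (\sum_(v <- T) rlo v * rhi v)%N.

Lemma rearrangement_roots n (S T : seq (posroot n)) : pairwise (@le_root n) S ->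
  perm_eq (map (@rlo n) T) (map (@rlo n) S) -> perm_eq (map (@rhi n) T) (map (@rhi n) S) ->
  (root_weight T < root_weight S)%N || perm_eq T S.
Proof.
pose pr (v : posroot n) := (rlo v, rhi v).
have pr_inj : injective pr by move=> x y [e1 e2]; apply: posroot_eq.
move=> hS h1 h2; have := @rearrangement (map pr S) _ (map pr T).
rewrite pairwise_map /unzip1 /unzip2 -!map_comp /pair_weight !big_map.
by move=> /(_ hS h1 h2) /orP[->|/(perm_map_inj pr_inj) ->]; rewrite ?orbT.
Qed.

Lemma fmono_nseq (F : fieldType) n (v : posroot n) k : fmono F (nseq k v) = fvar F v ^+ k.
Proof.
by elim: k => [|k IH]; rewrite /fmono ?big_nil ?expr0 // big_cons -/(fmono F _) IH exprS.
Qed.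

Lemma prod_esign_neq0 (F : fieldType) n l0 (w : seq (posroot n)) :
  \prod_(a <- w) esign F l0 a != 0.
Proof.
rewrite prodf_seq_neq0; apply/allP => a _.
by rewrite /esign; case: ifP; rewrite ?oppr_eq0 oner_neq0.
Qed.

Section RimWord.

Variables (n : nat) (c : posroot n).

Local Notation l0 := (rlo c).
Local Notation h1 := (rhi c).

(* Applied to the factor [f_c], [e_(rhi q, h1)] and then [e_(l0, rlo q)] produce
   [f_q]; an operator is omitted when the corresponding endpoints already agree. *)
Definition rim_ops (q : posroot n) :=
  seq_of_opt (mkroot n l0 (rlo q)) ++ seq_of_opt (mkroot n (rhi q) h1).

Definition rim_word (S : seq (posroot n)) := flatten (map rim_ops S).

Lemma rim_word_cons q S : rim_word (q :: S) = rim_ops q ++ rim_word S.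
Proof. by []. Qed.

Lemma rim_word_on_rim S : all (on_rim l0 h1) (rim_word S).
Proof.
apply/allP => a /flattenP[s /mapP[v _ ->]]; rewrite mem_cat /on_rim.
by case/orP; case: mkrootP => //= u e1 e2; rewrite inE => /eqP ->; rewrite e1 e2 eqxx ?orbT.
Qed.

Lemma mem_wterms_opt (o : option (posroot n)) P Q v u Ts :
  P ++ v :: Q \in Ts -> (if o is Some a then eshift l0 h1 a v == Some u else u == v) ->
  P ++ u :: Q \in wterms l0 h1 (seq_of_opt o) Ts.
Proof.
case: o => [a|] hT /eqP e /=; last by rewrite e.
by apply: (mem_wterms_cons (w := [::]) hT); apply: mem_leibniz.
Qed.

Lemma mem_wterms_rim_ops q P Q Ts : in_box l0 h1 q ->
  P ++ c :: Q \in Ts -> P ++ q :: Q \in wterms l0 h1 (rim_ops q) Ts.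
Proof.
case/andP=> hlq hqh hT; have lt_l0_hq := leq_ltn_trans hlq (rlo_lt_rhi q).
have [c' e1 e2] : exists2 c' : posroot n, rlo c' = l0 & rhi c' = rhi q.
  by case: (mkrootP n l0 (rhi q)) => [c' ? ?|]; [exists c' | rewrite lt_l0_hq rhi_lt].
rewrite /rim_ops wterms_cat; apply: (mem_wterms_opt (v := c')); last first.
  case: (mkrootP n l0 (rlo q)) => [a ea1 ea2|na].
    by rewrite /eshift ea1 e1 !eqxx ea2 e2 mkrootK.
  apply/eqP/posroot_eq; last by [].
  apply/eqP; rewrite e1 eqn_leq hlq andbT leqNgt; apply: contra na => ->.
  by rewrite (ltn_trans (rlo_lt_rhi q) (rhi_lt q)).
apply: (mem_wterms_opt hT).
case: (mkrootP n (rhi q) h1) => [b eb1 eb2|nb].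
  by rewrite /eshift eb1 (gtn_eqF lt_l0_hq) eqxx -e1 -e2 mkrootK.
apply/eqP/posroot_eq => //; rewrite e2.
by apply/eqP; rewrite eqn_leq hqh leqNgt; apply: contra nb => ->; rewrite rhi_lt.
Qed.

Lemma mem_rim_word S : all (in_box l0 h1) S -> forall k,
  nseq k c ++ S \in wterms l0 h1 (rim_word S) [:: nseq (k + size S) c].
Proof.
elim: S => [|q S IH] /= => [_ k|/andP[bq bS] k]; first by rewrite cats0 addn0 mem_seq1.
rewrite wterms_cat; apply: mem_wterms_rim_ops => //.
by have := IH bS k.+1; rewrite addSnnS -[k.+1]addn1 nseqD -catA.
Qed.

Lemma lo_added_rim_ops q : in_box l0 h1 q ->
  lo_added l0 (rim_ops q) = [seq x <- [:: rlo q] | x != l0].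
Proof.
case/andP=> hlq _; have lt_l0_hq := leq_ltn_trans hlq (rlo_lt_rhi q).
rewrite /rim_ops lo_added_cat /lo_added.
have -> : [seq rhi b | b <- seq_of_opt (mkroot n (rhi q) h1) & rlo b == l0] = [::].
  by case: mkrootP => [b eb1 _|] //=; rewrite eb1 (gtn_eqF lt_l0_hq).
rewrite cats0; case: mkrootP => [a ea1 ea2|na] /=.
  have lt : (l0 < rlo q)%N by rewrite -ea1 -ea2 rlo_lt_rhi.
  by rewrite ea1 eqxx /= ea2 (gtn_eqF lt).
suff -> : rlo q = l0 by rewrite eqxx.
apply/eqP; rewrite eqn_leq hlq andbT leqNgt; apply: contra na => ->.
by rewrite (ltn_trans (rlo_lt_rhi q) (rhi_lt q)).
Qed.

Lemma hi_added_rim_ops q : in_box l0 h1 q ->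
  hi_added l0 (rim_ops q) = [seq x <- [:: rhi q] | x != h1].
Proof.
case/andP=> hlq hqh; have lt_l0_hq := leq_ltn_trans hlq (rlo_lt_rhi q).
rewrite /rim_ops hi_added_cat /hi_added.
have -> : [seq rlo a | a <- seq_of_opt (mkroot n l0 (rlo q)) & rlo a != l0] = [::].
  by case: mkrootP => [a ea1 _|] //=; rewrite ea1 eqxx.
case: mkrootP => [b eb1 eb2|nb] /=.
  have lt : (rhi q < h1)%N by rewrite -eb1 -eb2 rlo_lt_rhi.
  by rewrite eb1 (gtn_eqF lt_l0_hq) /= eb1 (ltn_eqF lt).
suff -> : rhi q = h1 by rewrite eqxx.
by apply/eqP; rewrite eqn_leq hqh leqNgt; apply: contra nb => ->; rewrite rhi_lt.
Qed.

Lemma rim_word_multisets S T : all (in_box l0 h1) S ->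
  T \in wterms l0 h1 (rim_word S) [:: nseq (size S) c] ->
  perm_eq (map (@rlo n) T) (map (@rlo n) S) /\ perm_eq (map (@rhi n) T) (map (@rhi n) S).
Proof.
move=> bS /wterms_perm[pl ph]; rewrite !map_nseq in pl ph.
have [loE hiE] : lo_added l0 (rim_word S) = [seq x <- map (@rlo n) S | x != l0] /\
                 hi_added l0 (rim_word S) = [seq x <- map (@rhi n) S | x != h1].
  elim: S bS {pl ph} => [//|q S IH /andP[bq /IH[IHl IHh]]].
  rewrite rim_word_cons lo_added_cat hi_added_cat lo_added_rim_ops // hi_added_rim_ops //.
  by rewrite IHl IHh /=; split; case: ifP.
rewrite loE hiE in pl ph.
by split; apply: perm_cancel_padding; rewrite size_map; [apply: pl | apply: ph].
Qed.

Lemma rim_word_leading (F : fieldType) (hF : [pchar F] =i pred0) S :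
  all (in_box l0 h1) S -> pairwise (@le_root n) S ->
  exists (kap eps : F) (L : seq (seq (posroot n))),
   [/\ kap != 0,
       wact (rim_word S) (fvar F c ^+ size S)
         = kap *: fmono F S + eps *: \sum_(T <- L) fmono F T
     & forall T, T \in L -> (root_weight T < root_weight S)%N].
Proof.
move=> bS hS; set Ts := wterms l0 h1 (rim_word S) [:: nseq (size S) c].
set E := \prod_(a <- rim_word S) esign F l0 a.
have actE : wact (rim_word S) (fvar F c ^+ size S) = E *: \sum_(T <- Ts) fmono F T.
  have -> : fvar F c ^+ size S = \sum_(T <- [:: nseq (size S) c]) fmono F T.
    by rewrite big_seq1 fmono_nseq.
  rewrite (wact_wterms _ (rim_word_on_rim S)) // => T.
  by rewrite inE => /eqP ->; apply/allP => x /nseqP[-> _]; rewrite /in_box !leqnn.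
exists (E * (count (perm_eq^~ S) Ts)%:R), E, [seq T <- Ts | ~~ perm_eq T S]; split.
- rewrite mulf_neq0 ?prod_esign_neq0 // ((pcharf0P F).1 hF) -lt0n -has_count.
  by apply/hasP; exists S => //; have := mem_rim_word bS 0.
- rewrite actE (bigID (perm_eq^~ S)) /= scalerDr big_filter; congr (_ + _).
  rewrite (eq_bigr (fun=> fmono F S)) => [|T pTS]; last exact: perm_big.
  by rewrite big_const_seq iter_addr_0 -scaler_nat scalerA.
- move=> T; rewrite mem_filter => /andP[nTS /(rim_word_multisets bS)[p1 p2]].
  by case/orP: (rearrangement_roots hS p1 p2) => // pTS; rewrite pTS in nTS.
Qed.

End RimWord.

Section Expand.

Variables (T : eqType) (t : T -> nat).

Definition expand (s : seq T) := flatten [seq nseq (t x) x | x <- s].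

Lemma expand_cons x s : expand (x :: s) = nseq (t x) x ++ expand s.
Proof. by []. Qed.

Lemma size_expand s : size (expand s) = (\sum_(x <- s) t x)%N.
Proof. by elim: s => [|x s IH]; rewrite ?big_nil // expand_cons big_cons size_cat size_nseq IH. Qed.

Lemma mem_expand s x : x \in expand s -> x \in s.
Proof. by case/flattenP => _ /mapP[y hy ->] /nseqP[-> _]. Qed.

Lemma count_expand s v : uniq s -> (count_mem v (expand s) <= t v)%N.
Proof.
elim: s => [|x s IH] // /andP[nxs us]; rewrite expand_cons count_cat count_nseq.
case: (eqVneq x v) => [<-|nxv] /=; last by rewrite (negbTE nxv) mul0n IH.
suff -> : count_mem x (expand s) = 0%N by rewrite eqxx mul1n addn0.
by apply/count_memPn; apply: contra nxs => /mem_expand.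
Qed.

Lemma pairwise_expand (r : rel T) s : reflexive r -> pairwise r s -> pairwise r (expand s).
Proof.
move=> rr; elim: s => [|x s IH] // /andP[hx /IH hs].
rewrite expand_cons pairwise_cat hs andbT; apply/andP; split.
  by apply/allrelP => _ y /nseqP[-> _] /mem_expand hy; apply: (allP hx).
by elim: (t x) => [|k IHk] //=; rewrite IHk andbT all_nseq rr orbT.
Qed.

End Expand.

Lemma dyck_step_le n (x y : posroot n) : dyck_step x y -> le_root x y.
Proof. by rewrite /le_root => /orP[] /andP[/eqP -> /eqP ->]; rewrite leqnSn leqnn. Qed.

Lemma dyck_step_height n (x y : posroot n) : dyck_step x y -> (rlo x + rhi x < rlo y + rhi y)%N.
Proof. by move=> /orP[] /andP[/eqP -> /eqP ->]; rewrite ?addSn ?addnS. Qed.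

Lemma path_le_root_bounds n (b : posroot n) p : path (@le_root n) b p ->
  {in b :: p, forall x, le_root b x && le_root x (last b p)}.
Proof.
elim: p b => [|y p IH] b /=; first by move=> _ x /[1!inE] /eqP ->; rewrite le_root_refl.
case/andP=> hby /IH {}IH x; rewrite inE => /predU1P[->|hx].
  by rewrite le_root_refl (le_root_trans hby) //; case/andP: (IH y (mem_head _ _)).
by case/andP: (IH x hx) => h1 ->; rewrite (le_root_trans hby).
Qed.

Lemma dyck_path_uniq n (b : posroot n) p : dyck_path (b :: p) -> uniq (b :: p).
Proof.
move=> hd; apply: (@sorted_uniq _ (fun x y => rlo x + rhi x < rlo y + rhi y)%N).
- by move=> y x z; apply: ltn_trans.
- by move=> x; rewrite /= ltnn.
- by apply: sub_path (hd : path _ b p) => x y /dyck_step_height.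
Qed.

Lemma dyck_path_box n (b c : posroot n) p : dyck_path (b :: p) -> base_root b p = Some c ->
  all (in_box (rlo c) (rhi c)) (b :: p).
Proof.
rewrite /base_root -/(mkroot n _ _) => hd; case: mkrootP => // u e1 e2 [<-]; rewrite e1 e2.
apply/allP => x /(path_le_root_bounds (sub_path (@dyck_step_le n) (hd : path _ b p))).
by case/andP=> /andP[h1 _] /andP[_ h2]; rewrite /in_box h1 h2.
Qed.

Lemma violated_chain n (a t : posroot n -> nat) : ~ in_Sa a t ->
  exists c (S : seq (posroot n)), [/\ size S = (a c).+1, all (in_box (rlo c) (rhi c)) S,
    pairwise (@le_root n) S & forall v, (count_mem v S <= t v)%N].
Proof.
move=> nS; have [b [p [c [hd hb ltS]]]] : exists b p c, [/\ dyck_path (b :: p),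
    base_root b p = Some c & (a c < \sum_(x <- b :: p) t x)%N].
  apply: NNPP => nex; apply: nS => b p c hd hb; rewrite leqNgt; apply/negP => lt.
  by apply: nex; exists b, p, c.
exists c, (take (a c).+1 (expand t (b :: p))); split.
- by apply: size_takel; rewrite size_expand.
- apply/allP => x /mem_take /mem_expand.
  exact: (allP (dyck_path_box hd hb)).
- apply: subseq_pairwise (take_subseq _ _) _; apply: pairwise_expand; first exact: le_root_refl.
  rewrite -sorted_pairwise; last exact: le_root_trans.
  by apply: sub_path (hd : path _ b p) => x y /dyck_step_le.
- move=> v; apply: leq_trans (count_expand t v (dyck_path_uniq hd)).
  by rewrite -[X in (_ <= count_mem _ X)%N](cat_take_drop (a c).+1) count_cat leq_addr.
Qed.

Definition mexp n (T : seq (posroot n)) : 'X_{1..nroots n} := (\sum_(v <- T) U_(ridx v))%MM.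

Lemma fmono_mexp (F : fieldType) n (T : seq (posroot n)) : fmono F T = 'X_[mexp T].
Proof. by rewrite /fmono /mexp -mprodXE. Qed.

Lemma mexp_count n (T : seq (posroot n)) i : mexp T i = count_mem (enum_val i) T.
Proof.
rewrite /mexp mnm_sumE; elim: T => [|v T IH]; rewrite ?big_nil // big_cons IH /= mnm1E.
by rewrite -(inj_eq enum_val_inj) /ridx enum_rankK.
Qed.

Definition mweight n (m : 'X_{1..nroots n}) : nat :=
  (\sum_(i < nroots n) m i * (rlo (enum_val i) * rhi (enum_val i)))%N.

Lemma mweightD n (m1 m2 : 'X_{1..nroots n}) : mweight (m1 + m2)%MM = (mweight m1 + mweight m2)%N.
Proof. by rewrite /mweight -big_split; apply: eq_bigr => i _; rewrite mnmDE mulnDl. Qed.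

Lemma mweight_mexp n (T : seq (posroot n)) : mweight (mexp T) = root_weight T.
Proof.
elim: T => [|v T IH].
  by rewrite /mweight /mexp /root_weight !big_nil big1 // => i _; rewrite mnm0E.
rewrite /mexp big_cons -/(mexp T) mweightD IH /root_weight big_cons; congr (_ + _)%N.
rewrite /mweight (bigD1 (ridx v)) //= mnm1E eqxx mul1n /ridx enum_rankK big1 ?addn0 //.
by move=> i hi; rewrite mnm1E eq_sym (negbTE hi).
Qed.

Lemma fmon_mpolyX (F : fieldType) n (m : 'X_{1..nroots n}) :
  fmon F [ffun v => m (ridx v)] = 'X_[m].
Proof.
rewrite mpolyXE_id /fmon (reindex (@ridx n)) /=; last by apply: onW_bij; apply: enum_rank_bij.
by apply: eq_bigr => v _; rewrite ffunE.
Qed.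

Section SpanModuloIdeal.

Variables (F : fieldType) (n : nat) (a : posroot n -> nat).

Lemma in_Ia0 : in_Ia a (0 : Sn F n).
Proof. by exists [::]; rewrite big_nil. Qed.

Lemma in_IaD (P Q : Sn F n) : in_Ia a P -> in_Ia a Q -> in_Ia a (P + Q).
Proof. by move=> [l1 ->] [l2 ->]; exists (l1 ++ l2); rewrite big_cat. Qed.

Lemma in_IaZ k (P : Sn F n) : in_Ia a P -> in_Ia a (k *: P).
Proof.
move=> [l ->]; exists [seq (k *: x.1.1, x.1.2, x.2) | x <- l].
by rewrite big_map scaler_sumr; apply: eq_bigr => x _; rewrite scalerAl.
Qed.

Definition spanned (Q : Sn F n) :=
  exists l : seq ({ffun posroot n -> nat} * F),
    (forall x, x \in l -> in_Sa a x.1) /\ in_Ia a (Q - \sum_(x <- l) x.2 *: fmon F x.1).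

Lemma in_Ia_spanned Q : in_Ia a Q -> spanned Q.
Proof. by move=> hQ; exists [::]; rewrite big_nil subr0. Qed.

Lemma spannedD P Q : spanned P -> spanned Q -> spanned (P + Q).
Proof.
move=> [l1 [h1 i1]] [l2 [h2 i2]]; exists (l1 ++ l2); split.
  by move=> x; rewrite mem_cat => /orP[/h1|/h2].
by rewrite big_cat opprD addrACA; apply: in_IaD.
Qed.

Lemma spannedZ k P : spanned P -> spanned (k *: P).
Proof.
move=> [l [h i]]; exists [seq (x.1, k * x.2) | x <- l]; split.
  by move=> x /mapP[y hy ->] /=; apply: h.
rewrite big_map; under eq_bigr do rewrite -scalerA.
by rewrite -scaler_sumr -scalerBr; apply: in_IaZ.
Qed.

Lemma spanned_sum (I : eqType) (r : seq I) (G : I -> Sn F n) :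
  (forall i, i \in r -> spanned (G i)) -> spanned (\sum_(i <- r) G i).
Proof.
elim: r => [|i r IH] h; first by rewrite big_nil; apply/in_Ia_spanned/in_Ia0.
rewrite big_cons; apply: spannedD; first by apply: h; rewrite mem_head.
by apply: IH => j hj; apply: h; rewrite inE hj orbT.
Qed.

End SpanModuloIdeal.

Lemma spanned_monomial (F : fieldType) (hF : [pchar F] =i pred0) n (a : posroot n -> nat)
    (m : 'X_{1..nroots n}) :
  spanned a ('X_[m] : Sn F n).
Proof.
have [B] := ubnP (mweight m); elim: B m => // B IH m hm.
have [hin|] := classic (in_Sa a [ffun v => m (ridx v)]).
  exists [:: ([ffun v => m (ridx v)], 1)]; split; first by move=> x /[1!inE] /eqP ->.
  by rewrite big_seq1 /= scale1r fmon_mpolyX subrr; apply: in_Ia0.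
case/violated_chain => c [S [sizeS bS hS cntS]].
have [kap [eps [L [kap0 actE ltL]]]] := rim_word_leading hF bS hS.
rewrite sizeS in actE.
have leS : (mexp S <= m)%MM.
  apply/mnm_lepP => i; rewrite mexp_count.
  by have := cntS (enum_val i); rewrite ffunE /ridx enum_valK.
set m' := (m - mexp S)%MM.
have mE : 'X_[m] = kap^-1 *: ('X_[m'] * wact (rim_word c S) (fvar F c ^+ (a c).+1))
                   + (- (kap^-1 * eps)) *: \sum_(T <- L) 'X_[m' + mexp T] :> Sn F n.
  have -> : \sum_(T <- L) 'X_[m' + mexp T] = 'X_[m'] * \sum_(T <- L) fmono F T :> Sn F n.
    by rewrite mulr_sumr; apply: eq_bigr => T _; rewrite mpolyXD fmono_mexp.
  rewrite actE mulrDr -!scalerAr scalerDr !scalerA mulVf // scale1r scaleNr addrK.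
  by rewrite fmono_mexp -mpolyXD submK.
rewrite mE; apply: spannedD.
  apply: in_Ia_spanned; exists [:: (kap^-1 *: 'X_[m'], rim_word c S, c)].
  by rewrite big_seq1 /= scalerAl.
apply/spannedZ/spanned_sum => T /ltL ltT; apply: IH.
move: hm; rewrite mweightD mweight_mexp -{1}(submK leS) mweightD mweight_mexp -/m'; lia.
Qed.

Theorem lemma4p1 (F : fieldType) (hF : [pchar F] =i pred0) (n : nat)
    (a : posroot n -> nat) (P : Sn F n) :
  exists l : seq ({ffun posroot n -> nat} * F),
    (forall x, x \in l -> in_Sa a x.1) /\
    in_Ia a (P - \sum_(x <- l) x.2 *: fmon F x.1).
Proof.
suff : spanned a P by [].
by rewrite [P]mpolyE; apply: spanned_sum => m _; apply/spannedZ/spanned_monomial.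
Qed.
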